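(* Let $r\in\mathbb{Z}_{\ge0}$ and let $\chi$ be a character of $T$ of depth $r$. Then for every integer $n\ge r+1$, every irreducible $\mathcal{K}$-subrepresentation of $V_\chi^{\mathcal{K}_n}$ has depth less than $n$, and $\dim_{\mathbb{C}}V_\chi^{\mathcal{K}_n}=q^{n-1}(q+1)$.
   Context: Let $F$ be a non-archimedean local field with odd residual characteristic, ring of integers $\mathcal{O}_F$, residue field of cardinality $q$. Fix a non-square $\epsilon\in\mathcal{O}_F^\times$, $E=F[\sqrt\epsilon]$ with ring of integers $\mathcal{O}_E$, maximal ideal $\mathfrak{p}_E$; $\overline{x}$ is Galois conjugation. $G=\{g\in\mathrm{GL}_2(E):\overline{g}^{\top}\mathrm{w}g=\mathrm{w}\}$, $\mathrm{w}=\begin{pmatrix}0&1\\1&0\end{pmatrix}$; $\mathcal{K}=G\cap M_2(\mathcal{O}_E)$, $\mathcal{K}_n=\{g\in\mathcal{K}:g\equiv I\bmod\mathfrak{p}_E^n\}$. $B$ upper triangular matrices in $G$, $T=\{t(a)=\mathrm{diag}(a,\overline a^{-1}):a\in E^\times\}$, $U=\{\begin{pmatrix}1&\sqrt\epsilon b\\0&1\end{pmatrix}:b\in F\}$. $T_0=\{t(a):a\in\mathcal{O}_E^\times\}$, $T_n=\{t(a):a\in1+\mathfrak{p}_E^n\}$. A character $\chi$ of $T$ has depth $r$ if $\chi|_{T_r}\ne\mathbbm{1}$, $\chi|_{T_{r+1}}=\mathbbm{1}$; a character trivial on $T_0$ also has depth $0$. $V_\chi$ is the space of locally constant $f:G\to\mathbb{C}$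 with $f(bg)=\chi(b)f(g)$ ($b\in B$; $\chi$ trivial on $U$), $G$ acting by right translation; $V_\chi^{\mathcal{K}_n}$ is its $\mathcal{K}$-stable subspace of $\mathcal{K}_n$-fixed vectors. The depth of an irreducible smooth representation of $\mathcal{K}$ is the least integer $d\ge0$ such that $\mathcal{K}_{d+1}$ acts trivially. *)

(* Setting of Lemma 4.3: G = U(1,1) over a quadratic
   unramified extension E = F[sqrt eps] of a non-archimedean local field F. *)
From HB Require Import structures.
From mathcomp Require Import all_boot all_order all_algebra complex.
From mathcomp Require Import Rstruct.
Import Order.TTheory GRing.Theory Num.Theory ComplexField.
Local Open Scope ring_scope.

Definition CC : fieldType := (Rdefinitions.R)[i].

(* The data: F, E, the normalized valuation v of F (its value at 0 is
   irrelevant), the residue cardinality q, the embedding iota : F -> E,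
   the non-square eps, s = sqrt eps in E, and the Galois conjugation cj. *)
Record U11data := {
  uF : fieldType;
  uE : fieldType;
  uv : uF -> int;
  uq : nat;
  uiota : {rmorphism uF -> uE};
  ueps : uF;
  us : uE;
  ucj : uE -> uE }.

Section Defs.

Definition inPF (D : U11data) (m : int) (x : uF D) : Prop :=
  x = 0 \/ m <= uv D x.

(* z in p_E^m : valuation of E extending v, normalized (E/F unramified),
   v_E(z) = v_F(z * conj z) / 2. *)
Definition inPE (D : U11data) (m : nat) (z : uE D) : Prop :=
  exists c : uF D, uiota D c = z * ucj D z /\ inPF D (2 * m)%:Z c.

(* Axioms: F non-archimedean local field with residue field of odd
   cardinality q; E = F[s], s^2 = eps, eps a non-square unit of O_F. *)
Record U11_ax (D : U11data) : Prop := {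
  val_mul : forall x y : uF D, x != 0 -> y != 0 ->
      uv D (x * y) = uv D x + uv D y;
  val_add : forall x y : uF D, x != 0 -> y != 0 -> x + y != 0 ->
      Num.min (uv D x) (uv D y) <= uv D (x + y);
  val_unif : exists pi : uF D, pi != 0 /\ uv D pi = 1;
  val_complete : forall u : nat -> uF D,
      (forall k : int, exists N, forall i j, (N <= i)%N -> (N <= j)%N ->
         inPF D k (u i - u j)) ->
      exists L, forall k : int, exists N, forall i, (N <= i)%N ->
         inPF D k (u i - L);
  residue_card : exists reps : seq (uF D), size reps = uq D /\
      (forall x, x \in reps -> inPF D 0 x) /\
      (forall i j, (i < uq D)%N -> (j < uq D)%N ->
         inPF D 1 (nth 0 reps i - nth 0 reps j) -> i = j) /\
      (forall x, inPF D 0 x -> exists i, (i < uq D)%N /\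
         inPF D 1 (x - nth 0 reps i));
  q_odd : odd (uq D);
  eps_unit : ueps D != 0 /\ uv D (ueps D) = 0;
  eps_nonsq : forall x : uF D, x ^+ 2 != ueps D;
  s_sq : us D ^+ 2 = uiota D (ueps D);
  E_span : forall z : uE D, exists a b, z = uiota D a + uiota D b * us D;
  cj_def : forall a b : uF D,
      ucj D (uiota D a + uiota D b * us D) = uiota D a - uiota D b * us D }.

Definition Mat (D : U11data) := 'M[uE D]_2.

Definition wmx (D : U11data) : Mat D :=
  \matrix_(i, j) (if i != j then 1 else 0).

Definition inG (D : U11data) (g : Mat D) : Prop :=
  (map_mx (ucj D) g)^T *m wmx D *m g = wmx D.

Definition inK (D : U11data) (m : nat) (k : Mat D) : Prop :=
  inG D k /\ forall i j, inPE D m (k i j - (i == j)%:R).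

Definition inB (D : U11data) (b : Mat D) : Prop :=
  inG D b /\ b ord_max ord0 = 0.

(* characters of T = { t(a) } ~ E^x : chi a stands for chi(t(a)) *)
Definition is_char (D : U11data) (chi : uE D -> CC) : Prop :=
  (forall x y, x != 0 -> y != 0 -> chi (x * y) = chi x * chi y) /\
  (forall x, x != 0 -> chi x != 0).

(* t(a) in T_m : T_0 = t(O_E^x), T_m = t(1 + p_E^m) for m >= 1 *)
Definition inT (D : U11data) (m : nat) (a : uE D) : Prop :=
  if m == 0%N then inPE D 0 a /\ ~ inPE D 1 a else inPE D m (a - 1).

Definition triv_on (D : U11data) (chi : uE D -> CC) (m : nat) : Prop :=
  forall a, inT D m a -> chi a = 1.

Definition char_depth (D : U11data) (chi : uE D -> CC) (r : nat) : Prop :=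
  (~ triv_on D chi r /\ triv_on D chi r.+1) \/ (r = 0%N /\ triv_on D chi 0).

Definition Fun (D : U11data) := Mat D -> CC.

(* V_chi^{K_n}: functions on G (extended by 0 off G), locally constant,
   f(bg) = chi(b) f(g), and right K_n-invariant. *)
Definition Vfix (D : U11data) (chi : uE D -> CC) (n : nat) (f : Fun D) : Prop :=
  (forall g, ~ inG D g -> f g = 0) /\
  (forall g, inG D g -> exists m, forall k, inK D m k -> f (g *m k) = f g) /\
  (forall b g, inB D b -> inG D g -> f (b *m g) = chi (b ord0 ord0) * f g) /\
  (forall g k, inG D g -> inK D n k -> f (g *m k) = f g).

Definition subspace (D : U11data) (W : Fun D -> Prop) : Prop :=
  W (fun _ => 0) /\ (forall f h, W f -> W h -> W (fun g => f g + h g)) /\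
  (forall (c : CC) f, W f -> W (fun g => c * f g)).

Definition Kstable (D : U11data) (W : Fun D -> Prop) : Prop :=
  forall f k, W f -> inK D 0 k -> W (fun g => f (g *m k)).

Definition subrep (D : U11data) (V W : Fun D -> Prop) : Prop :=
  (forall f, W f -> V f) /\ subspace D W /\ Kstable D W.

Definition irr_subrep (D : U11data) (V W : Fun D -> Prop) : Prop :=
  subrep D V W /\ (exists f, W f /\ f <> (fun _ => 0)) /\
  (forall W', subrep D W W' ->
     (forall f, W' f -> f = (fun _ => 0)) \/ (forall f, W f -> W' f)).

Definition acts_trivially (D : U11data) (W : Fun D -> Prop) (m : nat) : Prop :=
  forall f k g, W f -> inK D m k -> f (g *m k) = f g.

Definition rep_depth (D : U11data) (W : Fun D -> Prop) (d : nat) : Prop :=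
  acts_trivially D W d.+1 /\ forall d', (d' < d)%N -> ~ acts_trivially D W d'.+1.

Definition has_dim (D : U11data) (V : Fun D -> Prop) (N : nat) : Prop :=
  exists b : 'I_N -> Fun D, (forall i, V (b i)) /\
    (forall c : 'I_N -> CC, (forall g, \sum_i c i * b i g = 0) ->
        forall i, c i = 0) /\
    (forall f, V f -> exists c : 'I_N -> CC,
        forall g, f g = \sum_i c i * b i g).

End Defs.

(* Every [g] in [G] factors as [g = b r_j k] with [b] in [B], [k] in [K_n] and
   [r_j] one of the [q^n + q^(n-1)] matrices [[1, 0], [s y, 1]] ([y] in [O_F / p_F^n])
   and [w [1, s x], [0, 1]] ([x] in [p_F / p_F^n]): the bottom row of [g] is
   proportional to [(s y, 1)] for some [y] in [F], or to [(1, s x)] when [y] is not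
   integral.  The index [j] is unique, and [b] is unique up to [T_n], on which [chi]
   is trivial when [n > r]; hence [f |-> (f r_j)_j] identifies [V_chi^{K_n}] with
   [C^(q^(n-1) (q+1))].  Uniqueness rests on [v_F (a^2 - eps b^2) = 2 min (v_F a, v_F b)],
   i.e. on [eps] not being a square modulo [p_F]: by Hensel's lemma, since [2] is a unit
   ([q] is odd).  The depth bound holds because [K_n] acts trivially on [V_chi^{K_n}]. *)

From mathcomp Require Import all_boot all_order all_algebra.
From mathcomp Require Import ring zify.
From Stdlib Require Import ClassicalEpsilon Classical.
Import Order.TTheory GRing.Theory Num.Theory.
Local Open Scope ring_scope.
Set Implicit Arguments. Unset Strict Implicit. Unset Printing Implicit Defensive.

Lemma fixfree_involution_even n (f : 'I_n -> 'I_n) :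
  involutive f -> (forall i, f i != i) -> ~~ odd n.
Proof.
move=> fK ffree.
have split_n : n = (\sum_(i < n) ((i < f i)%N + (f i < i)%N))%N.
  rewrite -[n in LHS]card_ord -sum1_card; apply: eq_bigr => i _.
  case: ltngtP => // eq_i; move/negP: (ffree i); case.
  by rewrite -(inj_eq val_inj) /= eq_i.
have swap : (\sum_(i < n) (f i < i)%N = \sum_(i < n) (i < f i)%N)%N.
  by rewrite (reindex_inj (inv_inj fK)); apply: eq_bigr => i _; rewrite fK.
by rewrite split_n big_split /= swap addnn odd_double.
Qed.

Record is_valuation (F : fieldType) (v : F -> int) : Prop := IsValuation {
  valuationM : forall x y, x != 0 -> y != 0 -> v (x * y) = v x + v y;
  valuationD : forall x y, x != 0 -> y != 0 -> x + y != 0 ->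
    Num.min (v x) (v y) <= v (x + y) }.

(* [vge v m x] says [x \in p^m], without reading the junk value [v 0];
   [inPF D] unfolds to [vge (uv D)]. *)
Definition vge (F : fieldType) (v : F -> int) (m : int) (x : F) : Prop :=
  x = 0 \/ m <= v x.

Section Valuation.
Variables (F : fieldType) (v : F -> int).
Hypothesis vF : is_valuation v.
Local Notation vge := (vge v).

Lemma valuation1 : v 1 = 0.
Proof. by apply: (addrI (v 1)); rewrite -(valuationM vF) ?oner_neq0 // mulr1 addr0. Qed.

Lemma valuationN x : v (- x) = v x.
Proof.
have N1 : (-1 : F) != 0 by rewrite oppr_eq0 oner_neq0.
have vN1 : v (-1) = 0.
  by have := valuationM vF N1 N1; rewrite mulrNN mulr1 valuation1; move: (v (-1)) => a; lia.
have [->|x0] := eqVneq x 0; first by rewrite oppr0.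
by rewrite -mulN1r (valuationM vF) // vN1 add0r.
Qed.

Lemma valuationV x : x != 0 -> v x^-1 = - v x.
Proof.
by move=> x0; apply: (addrI (v x)); rewrite -(valuationM vF) ?invr_eq0 // mulfV // valuation1 subrr.
Qed.

Lemma valuationD_lt x y : x != 0 -> y != 0 -> v x < v y -> x + y != 0 /\ v (x + y) = v x.
Proof.
move=> x0 y0 lt_xy.
have xy0 : x + y != 0.
  by apply: contraTneq lt_xy => /eqP; rewrite addr_eq0 => /eqP ->; rewrite valuationN ltxx.
split=> //.
have lex : v x <= v (x + y) by move: (valuationD vF x0 y0 xy0); rewrite /Num.min lt_xy.
apply/le_anti; rewrite lex andbT.
have Ny0 : - y != 0 by rewrite oppr_eq0.
have := valuationD vF xy0 Ny0; rewrite addrK valuationN ge_min => /(_ x0) /orP[//|].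
by rewrite leNgt lt_xy.
Qed.

Lemma vge0 m : vge m 0.
Proof. by left. Qed.

Lemma vge_val x : vge (v x) x.
Proof. by right. Qed.

Lemma vge_le m x : x != 0 -> vge m x -> m <= v x.
Proof. by move=> x0 [x0'|//]; rewrite x0' eqxx in x0. Qed.

Lemma vgeW m l x : m <= l -> vge l x -> vge m x.
Proof. by move=> le_ml [->|lx]; [left|right; apply: le_trans lx]. Qed.

Lemma vgeN m x : vge m (- x) <-> vge m x.
Proof.
rewrite /vge valuationN; split=> -[x0|]; try by right.
- by left; apply/eqP; rewrite -oppr_eq0 x0.
- by left; rewrite x0 oppr0.
Qed.

Lemma vgeD m x y : vge m x -> vge m y -> vge m (x + y).
Proof.
move=> [->|mx]; first by rewrite add0r.
move=> [->|my]; first by rewrite addr0; right.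
have [->|x0] := eqVneq x 0; first by rewrite add0r; right.
have [->|y0] := eqVneq y 0; first by rewrite addr0; right.
have [->|xy0] := eqVneq (x + y) 0; first by left.
by right; apply: le_trans (valuationD vF x0 y0 xy0); rewrite le_min mx my.
Qed.

Lemma vgeB m x y : vge m x -> vge m y -> vge m (x - y).
Proof. by move=> mx my; apply: vgeD => //; apply/vgeN. Qed.

Lemma vgeM m l x y : vge m x -> vge l y -> vge (m + l) (x * y).
Proof.
move=> [->|mx]; first by rewrite mul0r; left.
move=> [->|ly]; first by rewrite mulr0; left.
have [->|x0] := eqVneq x 0; first by rewrite mul0r; left.
have [->|y0] := eqVneq y 0; first by rewrite mulr0; left.
by right; rewrite (valuationM vF) // lerD.
Qed.

Lemma vge01 : vge 0 1.
Proof. by right; rewrite valuation1. Qed.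

Lemma vge11 : ~ vge 1 1.
Proof. by case=> [/eqP|]; rewrite ?oner_eq0 // valuation1. Qed.

Lemma vge_div m x y : vge m x -> y != 0 -> vge (m - v y) (x / y).
Proof. by move=> mx y0; have := vgeM mx (vge_val y^-1); rewrite valuationV. Qed.

Lemma vge_exact x : x != 0 -> ~ vge (v x + 1) x.
Proof. by move=> x0 /(vge_le x0); rewrite gerDl. Qed.

Lemma vge_all_eq0 z : (forall k, vge k z) -> z = 0.
Proof. by move=> zk; apply/eqP/negP => /negP/vge_exact; apply. Qed.

Lemma valuation_sqr x : x != 0 -> v (x ^+ 2) = v x + v x.
Proof. by move=> x0; rewrite expr2 (valuationM vF). Qed.

Definition vcomplete := forall u : nat -> F,
  (forall k, exists N, forall i j, (N <= i)%N -> (N <= j)%N -> vge k (u i - u j)) ->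
  exists L, forall k, exists N, forall i, (N <= i)%N -> vge k (u i - L).

Definition residue_system (q : nat) (reps : seq F) : Prop :=
  size reps = q /\
  (forall x, x \in reps -> vge 0 x) /\
  (forall i j, (i < q)%N -> (j < q)%N -> vge 1 (nth 0 reps i - nth 0 reps j) -> i = j) /\
  (forall x, vge 0 x -> exists i, (i < q)%N /\ vge 1 (x - nth 0 reps i)).

(* If [2] lay in [p], translation by [1] would be a fixed-point-free
   involution of the residue field. *)
Lemma residue_odd_2_unit q reps :
  residue_system q reps -> odd q -> (2 : F) != 0 /\ v 2 = 0.
Proof.
move=> [size_reps [reps_int [reps_uniq reps_cover]]] odd_q.
have not_vge12 : ~ vge 1 2.
  move=> vge12; suff : ~~ odd q by rewrite odd_q.
  pose r (i : 'I_q) := nth 0 reps i.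
  have r_int i : vge 0 (r i) by apply: reps_int; rewrite mem_nth // size_reps.
  have succ i : exists j : 'I_q, vge 1 (r i + 1 - r j).
    by have [j [jq ?]] := reps_cover _ (vgeD (r_int i) vge01); exists (Ordinal jq).
  have [f Hf] := ClassicalEpsilon.choice _ succ.
  have r_inj i j : vge 1 (r i - r j) -> i = j.
    by move/reps_uniq => /(_ _ _) eq_ij; apply/val_inj/eq_ij.
  apply: (@fixfree_involution_even _ f) => [i|i].
    apply/esym/r_inj.
    have -> : r i - r (f (f i)) = (r i + 1 - r (f i)) + (r (f i) + 1 - r (f (f i))) - 2 by ring.
    by apply: vgeB => //; apply: vgeD.
  apply/eqP => fii; have := Hf i; rewrite fii; have -> : r i + 1 - r i = 1 by ring.
  exact: vge11.
have two0 : (2 : F) != 0 by apply: contra_notN not_vge12 => /eqP ->; left.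
split=> //.
have := valuationD vF (oner_neq0 F) (oner_neq0 F); rewrite -mulr2n valuation1 minxx => /(_ two0).
have : ~ 1 <= v 2 by move=> ?; apply: not_vge12; right.
by move: (v 2) => a; lia.
Qed.

End Valuation.

Section Hensel.
Variables (F : fieldType) (v : F -> int).
Hypothesis vF : is_valuation v.
Local Notation vge := (vge v).

Variable eps : F.
Hypotheses (two0 : (2 : F) != 0) (val2 : v 2 = 0).

Definition newton (y : F) := y - (y ^+ 2 - eps) / (2 * y).

Lemma newton_step y (k : nat) : y != 0 -> v y = 0 -> vge k.+1 (y ^+ 2 - eps) ->
  [/\ newton y != 0, v (newton y) = 0,
      vge k.+2 (newton y ^+ 2 - eps) & vge k.+1 (newton y - y)].
Proof.
move=> y0 vy ek.
have y20 : 2 * y != 0 by rewrite mulf_neq0.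
have vy2 : v (2 * y) = 0 by rewrite (valuationM vF) // val2 vy.
set e := y ^+ 2 - eps in ek *; set u := e / (2 * y).
have uk : vge k.+1 u by have := vge_div vF ek y20; rewrite vy2 subr0.
have newtonE : newton y = y - u by [].
have sqE : newton y ^+ 2 - eps = u ^+ 2.
  have ue : u * (2 * y) = e by rewrite divfK.
  transitivity (e - u * (2 * y) + u ^+ 2); first by rewrite newtonE /e; ring.
  by rewrite ue subrr add0r.
have [n0 vn] : newton y != 0 /\ v (newton y) = v y.
  rewrite newtonE; have [->|u0] := eqVneq u 0; first by rewrite subr0.
  apply: (valuationD_lt vF) => //; first by rewrite oppr_eq0.
  by rewrite (valuationN vF) vy; apply: lt_le_trans (vge_le u0 uk).
split=> //; first by rewrite vn.
  rewrite sqE expr2; apply: (@vgeW _ _ _ (k.+1 + k.+1)%:Z); first by lia.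
  by rewrite PoszD; apply: (vgeM vF).
by rewrite newtonE addrC addKr; apply/(vgeN vF).
Qed.

Hypothesis complete : vcomplete v.

(* The Newton iterates of [t] form a Cauchy sequence whose limit is a root. *)
Lemma hensel_sqrt t : t != 0 -> v t = 0 -> vge 1 (t ^+ 2 - eps) ->
  exists L, L ^+ 2 = eps.
Proof.
move=> t0 vt t1.
pose x k := iter k newton t.
have xk_spec k : [/\ x k != 0, v (x k) = 0 & vge k.+1 (x k ^+ 2 - eps)].
  elim: k => [|k [xk0 vxk xk1]]; first by split.
  by have [? ? ? _] := newton_step xk0 vxk xk1; split.
have x_cauchy j i : vge j.+1 (x (j + i)%N - x j).
  elim: i => [|i IHi]; first by rewrite addn0 subrr; left.
  have [xk0 vxk xk1] := xk_spec (j + i)%N.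
  have [_ _ _ step] := newton_step xk0 vxk xk1.
  have -> : x (j + i.+1)%N - x j = (x (j + i).+1 - x (j + i)%N) + (x (j + i)%N - x j).
    by rewrite addnS; ring.
  by apply: (vgeD vF _ IHi); apply: (vgeW _ step); rewrite lez_nat ltnS leq_addr.
have [L xL] : exists L, forall k, exists N, forall i, (N <= i)%N -> vge k (x i - L).
  apply: complete => k; exists `|k|%N => i j ki kj.
  have -> : x i - x j = (x (`|k| + (i - `|k|))%N - x `|k|%N) -
                        (x (`|k| + (j - `|k|))%N - x `|k|%N) by rewrite !subnKC //; ring.
  by apply: (vgeB vF); apply: (vgeW _ (x_cauchy _ _)); lia.
exists L; apply/eqP; rewrite -subr_eq0; apply/eqP/(vge_all_eq0 (v := v)) => k.
have [N xNL] := xL `|k|%:Z; pose i := maxn N `|k|.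
have xiL := xNL i (leq_maxl _ _).
have [_ vxi xi1] := xk_spec i.
have xiL0 : vge 0 (x i + L).
  have -> : x i + L = (x i + x i) - (x i - L) by ring.
  apply: (vgeB vF); first by apply: (vgeD vF); right; rewrite vxi.
  by apply: (vgeW _ xiL).
have -> : L ^+ 2 - eps = (x i ^+ 2 - eps) - (x i - L) * (x i + L) by ring.
apply: (vgeB vF); first by apply: (vgeW _ xi1); rewrite /i; lia.
by rewrite -[k]addr0; apply: (vgeM vF) => //; apply: (vgeW _ xiL); lia.
Qed.

End Hensel.

Section QuadraticNorm.
Variables (F : fieldType) (v : F -> int).
Hypotheses (vF : is_valuation v) (complete : vcomplete v).
Variable eps : F.
Hypotheses (two0 : (2 : F) != 0) (val2 : v 2 = 0).
Hypotheses (eps0 : eps != 0) (val_eps : v eps = 0) (eps_nonsq : forall x : F, x ^+ 2 != eps).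
Local Notation vge := (vge v).

Lemma residue_nonsquare t : vge 0 t -> ~ vge 1 (t ^+ 2 - eps).
Proof.
move=> t_int t1.
have eps1 : ~ vge 1 eps by have := vge_exact (v := v) eps0; rewrite val_eps add0r.
have t0 : t != 0.
  by apply/eqP => t0; apply: eps1; move: t1; rewrite t0 expr2 mul0r sub0r => /(vgeN vF).
have vt : v t = 0.
  apply/le_anti; rewrite (vge_le t0 t_int) andbT leNgt gtz0_ge1; apply/negP => vt1.
  apply: eps1; rewrite -[eps](subKr (t ^+ 2)); apply: (vgeB vF) t1.
  by rewrite expr2 -[X in vge X _]addr0; apply: (vgeM vF); [right|].
have [L /eqP] := hensel_sqrt vF two0 val2 complete t0 vt t1.
by rewrite (negPf (eps_nonsq L)).
Qed.

Definition qnorm a b := a ^+ 2 - eps * b ^+ 2.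

Lemma valuation_eps_sqr x : x != 0 -> v (- (eps * x ^+ 2)) = v x + v x.
Proof.
move=> x0; rewrite (valuationN vF) (valuationM vF) ?expf_neq0 //.
by rewrite val_eps add0r (valuation_sqr vF).
Qed.

Lemma qnorm_eq_val a b : a != 0 -> b != 0 -> v a = v b ->
  qnorm a b != 0 /\ v (qnorm a b) = v b + v b.
Proof.
move=> a0 b0 vab; pose t := a / b.
have t0 : t != 0 by rewrite mulf_neq0 ?invr_neq0.
have vt : v t = 0 by rewrite (valuationM vF) ?invr_neq0 // (valuationV vF) // vab subrr.
have tE : qnorm a b = b ^+ 2 * (t ^+ 2 - eps) by rewrite /qnorm /t; field.
have te0 : t ^+ 2 - eps != 0 by rewrite subr_eq0 eps_nonsq.
have vte : v (t ^+ 2 - eps) = 0.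
  have te_int : vge 0 (t ^+ 2 - eps).
    apply: (vgeB vF); last by right; rewrite val_eps.
    by rewrite expr2 -[X in vge X _]addr0; apply: (vgeM vF); right; rewrite vt.
  apply/le_anti; rewrite (vge_le te0 te_int) andbT leNgt gtz0_ge1; apply/negP => te1.
  by apply: (residue_nonsquare (t := t)); [right; rewrite vt|right].
rewrite tE mulf_neq0 ?expf_neq0 //; split=> //.
by rewrite (valuationM vF) ?expf_neq0 // vte addr0 (valuation_sqr vF).
Qed.

(* [k] is [min (v a) (v b)], phrased so as to avoid the junk value [v 0]. *)
Lemma qnorm_val a b : (a != 0) || (b != 0) -> exists k, [/\ qnorm a b != 0,
  v (qnorm a b) = k + k, vge k a, vge k b & ~ (vge (k + 1) a /\ vge (k + 1) b)].
Proof.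
have [->|a0] /= := eqVneq a 0 => [b0|_].
  have -> : qnorm 0 b = - (eps * b ^+ 2) by rewrite /qnorm; ring.
  exists (v b); rewrite valuation_eps_sqr // oppr_eq0.
  by rewrite mulf_neq0 ?expf_neq0 //; split=> //; [left|right|case=> _ /(vge_exact b0)].
have [->|b0] := eqVneq b 0.
  have -> : qnorm a 0 = a ^+ 2 by rewrite /qnorm; ring.
  exists (v a); rewrite (valuation_sqr vF) //.
  by rewrite expf_neq0 //; split=> //; [right|left|case=> /(vge_exact a0)].
have a20 : a ^+ 2 != 0 by rewrite expf_neq0.
have eb0 : - (eps * b ^+ 2) != 0 by rewrite oppr_eq0 mulf_neq0 ?expf_neq0.
case: (ltgtP (v a) (v b)) => vab.
- have lt_ab : v (a ^+ 2) < v (- (eps * b ^+ 2)).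
    by rewrite (valuation_sqr vF) // valuation_eps_sqr // ltrD.
  have [n0 vn] := valuationD_lt vF a20 eb0 lt_ab.
  exists (v a); split=> //; first by rewrite vn (valuation_sqr vF).
  - by right.
  - by right; exact: ltW.
  - by case=> /(vge_exact a0).
- have lt_ba : v (- (eps * b ^+ 2)) < v (a ^+ 2).
    by rewrite (valuation_sqr vF) // valuation_eps_sqr // ltrD.
  have [n0 vn] := valuationD_lt vF eb0 a20 lt_ba; rewrite addrC in n0 vn.
  exists (v b); split=> //; first by rewrite vn valuation_eps_sqr.
  - by right; exact: ltW.
  - by right.
  - by case=> _ /(vge_exact b0).
- have [n0 vn] := qnorm_eq_val a0 b0 vab.
  exists (v b); split=> //; first by right; rewrite vab.
  - by right.
  - by case=> _ /(vge_exact b0).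
Qed.

Lemma vge_qnorm m a b : vge (m + m) (qnorm a b) <-> vge m a /\ vge m b.
Proof.
have [ab0|] := boolP ((a != 0) || (b != 0)); last first.
  rewrite negb_or !negbK => /andP[/eqP-> /eqP->].
  have -> : qnorm 0 0 = 0 by rewrite /qnorm; ring.
  by split=> _; [split; left|left].
have [k [n0 vn ka kb kexact]] := qnorm_val ab0.
split=> [/(vge_le n0)|[ma mb]].
  by rewrite vn => mk; split; [apply: vgeW ka|apply: vgeW kb]; lia.
right; rewrite vn; suff mk : m <= k by apply: lerD.
rewrite leNgt; apply/negP => km; apply: kexact.
by split; [apply: vgeW ma|apply: vgeW mb]; lia.
Qed.

Lemma qnorm_unit a b : vge 0 a -> vge 0 b -> ~ (vge 1 a /\ vge 1 b) ->
  qnorm a b != 0 /\ v (qnorm a b) = 0.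
Proof.
move=> a_int b_int ab1.
have ab0 : (a != 0) || (b != 0).
  by rewrite -negb_and; apply/negP => /andP[/eqP a0 /eqP b0]; apply: ab1; split; left.
have [k [n0 vn ka kb kexact]] := qnorm_val ab0.
suff k0 : k = 0 by rewrite vn k0 addr0.
apply/le_anti; apply/andP; split; rewrite leNgt; apply/negP => k0.
  by apply: ab1; split; [apply: vgeW ka|apply: vgeW kb]; lia.
by apply: kexact; split; [apply: vgeW a_int|apply: vgeW b_int]; lia.
Qed.

End QuadraticNorm.

Section Expansion.
Variables (F : fieldType) (v : F -> int).
Hypothesis vF : is_valuation v.
Variables (q : nat) (reps : seq F) (pi : F).
Hypotheses (reps_sys : residue_system v q reps) (pi0 : pi != 0) (val_pi : v pi = 1).
Local Notation vge := (vge v).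

(* The [q ^ n] truncated expansions [sum_(i < n) reps_(m_i) pi^i], indexed by
   the base-[q] digits [m_i] of [m < q ^ n], represent [O / p^n]. *)
Fixpoint expansion (n m : nat) : F :=
  if n is n'.+1 then nth 0 reps (m %% q) + pi * expansion n' (m %/ q) else 0.

Let q_gt0 : (0 < q)%N.
Proof.
case: reps_sys => _ [_ [_ cover]]; have [i [iq _]] := cover 0 (vge0 v 0).
exact: leq_ltn_trans iq.
Qed.

Let rep_int i : (i < q)%N -> vge 0 (nth 0 reps i).
Proof.
by case: reps_sys => size_reps [reps_int _] iq; apply/reps_int/mem_nth; rewrite size_reps.
Qed.

Lemma vge_pi : vge 1 pi.
Proof. by right; rewrite val_pi. Qed.

Lemma vge_pi_mul m x : vge m x -> vge (m + 1) (pi * x).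
Proof. by move=> mx; rewrite addrC; apply: (vgeM vF) vge_pi mx. Qed.

Lemma vge_div_pi m x : vge m x -> vge (m - 1) (x / pi).
Proof. by move=> mx; have := vge_div vF mx pi0; rewrite val_pi. Qed.

Lemma expansion_int n m : vge 0 (expansion n m).
Proof.
elim: n m => [|n IHn] m /=; first exact: vge0.
apply: (vgeD vF); first by apply/rep_int; rewrite ltn_pmod.
by apply: vgeW (vge_pi_mul (IHn _)).
Qed.

Lemma expansion_cover n y : vge 0 y -> exists2 m, (m < q ^ n)%N & vge n (y - expansion n m).
Proof.
elim: n y => [|n IHn] y y_int; first by exists 0%N; rewrite ?expn0 //= subr0.
case: reps_sys => _ [_ [_ cover]]; have [i [iq yi]] := cover y y_int.
have [m mn ym] := IHn _ (vge_div_pi yi).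
exists (m * q + i)%N; first by rewrite expnSr; nia.
rewrite /= modnMDl divnMDl // modn_small // divn_small // addn0.
have -> : y - (nth 0 reps i + pi * expansion n m) =
          pi * ((y - nth 0 reps i) / pi - expansion n m) by field.
by move/vge_pi_mul: ym; rewrite addrC.
Qed.

Lemma expansion_inj n m m' : (m < q ^ n)%N -> (m' < q ^ n)%N ->
  vge n (expansion n m - expansion n m') -> m = m'.
Proof.
elim: n m m' => [|n IHn] m m'; first by rewrite expn0 !ltnS !leqn0 => /eqP-> /eqP->.
rewrite expnSr => mn m'n /=.
set d := nth 0 reps (m %% q) - nth 0 reps (m' %% q).
set e := expansion n (m %/ q) - expansion n (m' %/ q).
have -> : nth 0 reps (m %% q) + pi * expansion n (m %/ q) -
          (nth 0 reps (m' %% q) + pi * expansion n (m' %/ q)) = d + pi * e by rewrite /d /e; ring.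
move=> de.
have pie : vge 1 (pi * e).
  have e_int := vgeB vF (expansion_int n (m %/ q)) (expansion_int n (m' %/ q)).
  by move/vge_pi_mul: e_int; rewrite add0r.
have mod_eq : (m %% q = m' %% q)%N.
  case: reps_sys => _ [_ [uniq _]]; apply: uniq; rewrite ?ltn_pmod //.
  have -> : nth 0 reps (m %% q) - nth 0 reps (m' %% q) = d + pi * e - pi * e by rewrite addrK.
  by apply: (vgeB vF) pie; apply: vgeW de; lia.
have div_eq : (m %/ q = m' %/ q)%N.
  apply: IHn; rewrite ?ltn_divLR //.
  move: de; rewrite /d mod_eq subrr add0r => /vge_div_pi.
  by rewrite [pi * e]mulrC mulfK // => /vgeW; apply; lia.
by rewrite (divn_eq m q) (divn_eq m' q) mod_eq div_eq.
Qed.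

End Expansion.

Section Matrix2.
Variable R : pzRingType.
Local Notation i0 := (@ord0 1).
Local Notation i1 := (@ord_max 1).

Definition m2 (a b c d : R) : 'M[R]_2 :=
  \matrix_(i, j) if i == i0 then (if j == i0 then a else b) else (if j == i0 then c else d).

Lemma ord2P (i : 'I_2) : i = i0 \/ i = i1.
Proof. by case: i => [[|[|k]] lt_i2]; [left|right|by []]; apply: val_inj. Qed.

Lemma m2_00 a b c d : m2 a b c d i0 i0 = a. Proof. by rewrite mxE. Qed.
Lemma m2_01 a b c d : m2 a b c d i0 i1 = b. Proof. by rewrite mxE. Qed.
Lemma m2_10 a b c d : m2 a b c d i1 i0 = c. Proof. by rewrite mxE. Qed.
Lemma m2_11 a b c d : m2 a b c d i1 i1 = d. Proof. by rewrite mxE. Qed.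
Definition m2E := (m2_00, m2_01, m2_10, m2_11).

Lemma matrix2P (M N : 'M[R]_2) :
  M i0 i0 = N i0 i0 -> M i0 i1 = N i0 i1 -> M i1 i0 = N i1 i0 -> M i1 i1 = N i1 i1 -> M = N.
Proof. by move=> ? ? ? ?; apply/matrixP => i j; case: (ord2P i) => ->; case: (ord2P j) => ->. Qed.

Lemma m2_eta (M : 'M[R]_2) : M = m2 (M i0 i0) (M i0 i1) (M i1 i0) (M i1 i1).
Proof. by apply: matrix2P; rewrite m2E. Qed.

Lemma m2_inj a b c d a' b' c' d' : m2 a b c d = m2 a' b' c' d' ->
  [/\ a = a', b = b', c = c' & d = d'].
Proof. by move=> eq_m; split; [move: (m2_00 a b c d)|move: (m2_01 a b c d)|
  move: (m2_10 a b c d)|move: (m2_11 a b c d)]; rewrite eq_m m2E. Qed.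

Lemma mulmx2E (M N : 'M[R]_2) i j : (M *m N) i j = M i i0 * N i0 j + M i i1 * N i1 j.
Proof.
by rewrite mxE !big_ord_recl big_ord0 addr0; congr (_ + M i _ * N _ j); apply: val_inj.
Qed.

Lemma mulmx_m2 a b c d a' b' c' d' :
  m2 a b c d *m m2 a' b' c' d' =
  m2 (a * a' + b * c') (a * b' + b * d') (c * a' + d * c') (c * b' + d * d').
Proof. by apply: matrix2P; rewrite !mulmx2E !m2E. Qed.

Lemma m2_1 : 1%:M = m2 1 0 0 1.
Proof. by apply/matrixP => i j; rewrite !mxE; case: (ord2P i) => ->; case: (ord2P j) => ->. Qed.

Lemma tr_m2 a b c d : (m2 a b c d)^T = m2 a c b d.
Proof. by apply/matrixP => i j; rewrite !mxE; case: (ord2P i) => ->; case: (ord2P j) => ->. Qed.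

Lemma map_m2 (f : R -> R) a b c d : map_mx f (m2 a b c d) = m2 (f a) (f b) (f c) (f d).
Proof. by apply/matrixP => i j; rewrite !mxE; case: (ord2P i) => ->; case: (ord2P j) => ->. Qed.

End Matrix2.

Section U11.
Variable D : U11data.
Hypothesis HD : U11_ax D.

Local Notation F := (uF D).
Local Notation E := (uE D).
Local Notation v := (uv D).
Local Notation io := (uiota D).
Local Notation s := (us D).
Local Notation cj := (ucj D).
Local Notation eps := (ueps D).
Local Notation q := (uq D).
Local Notation pF := (vge v).
Local Notation pE := (inPE D).

Let vF : is_valuation v := IsValuation (val_mul D HD) (val_add D HD).
Let eps0 : eps != 0 := (eps_unit D HD).1.
Let val_eps : v eps = 0 := (eps_unit D HD).2.

Let two_unit : (2 : F) != 0 /\ v 2 = 0.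
Proof.
have [reps reps_sys] := residue_card D HD.
exact (residue_odd_2_unit vF (reps_sys : residue_system v q reps) (q_odd D HD)).
Qed.

Let vge_qnorm m a b : pF (m + m) (qnorm eps a b) <-> pF m a /\ pF m b.
Proof.
exact (vge_qnorm vF (val_complete D HD) two_unit.1 two_unit.2 eps0 val_eps (eps_nonsq D HD) m a b).
Qed.

Let qnorm_unit a b : pF 0 a -> pF 0 b -> ~ (pF 1 a /\ pF 1 b) ->
  qnorm eps a b != 0 /\ v (qnorm eps a b) = 0.
Proof.
exact (qnorm_unit (a := a) (b := b) vF (val_complete D HD) two_unit.1 two_unit.2 eps0 val_eps
  (eps_nonsq D HD)).
Qed.

Definition re (z : E) : F := epsilon (inhabits 0) (fun a => exists b, z = io a + io b * s).
Definition im (z : E) : F := epsilon (inhabits 0) (fun b => z = io (re z) + io b * s).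

Lemma coordE z : z = io (re z) + io (im z) * s.
Proof.
have re_spec : exists b, z = io (re z) + io b * s.
  by apply: (epsilon_spec _ (fun a => exists b, z = io a + io b * s)); apply: E_span.
exact: (epsilon_spec _ (fun b => z = io (re z) + io b * s) re_spec).
Qed.

Lemma coord_inj a b a' b' : io a + io b * s = io a' + io b' * s -> a = a' /\ b = b'.
Proof.
move=> eq_ab.
have eq_b : b = b'.
  apply/eqP/negPn/negP => neq_b.
  have bb0 : io b' - io b != 0 by rewrite -rmorphB fmorph_eq0 subr_eq0 eq_sym.
  have s_io : s = io ((a - a') / (b' - b)).
    rewrite fmorph_div !rmorphB; apply: (canRL (mulfK bb0)).
    apply/eqP; rewrite -subr_eq0; apply/eqP.
    by transitivity (io a' + io b' * s - (io a + io b * s)); [ring|rewrite eq_ab subrr].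
  have /eqP := s_sq D HD.
  by rewrite s_io -rmorphXn (inj_eq (fmorph_inj _)) (negPf (eps_nonsq D HD _)).
by split=> //; subst b'; apply: (fmorph_inj io); apply: (addIr (io b * s)).
Qed.

Lemma coord_eq z a b : z = io a + io b * s -> re z = a /\ im z = b.
Proof. by move=> ->; apply: coord_inj; rewrite -coordE. Qed.

Ltac coord_ring := rewrite ?(rmorphXn, rmorphD, rmorphB, rmorphM, rmorphN) -?(s_sq D HD); ring.

Lemma cjE z : cj z = io (re z) - io (im z) * s.
Proof. by rewrite {1}(coordE z) (cj_def D HD). Qed.

Lemma cjD z w : cj (z + w) = cj z + cj w.
Proof.
have -> : z + w = io (re z + re w) + io (im z + im w) * s.
  by rewrite {1}(coordE z) {1}(coordE w); coord_ring.
by rewrite (cj_def D HD) !cjE; coord_ring.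
Qed.

Lemma cjM z w : cj (z * w) = cj z * cj w.
Proof.
have -> : z * w = io (re z * re w + eps * (im z * im w)) + io (re z * im w + im z * re w) * s.
  by rewrite {1}(coordE z) {1}(coordE w); coord_ring.
by rewrite (cj_def D HD) !cjE; coord_ring.
Qed.

Lemma cj_io a : cj (io a) = io a.
Proof. by have := cj_def D HD a 0; rewrite rmorph0 !mul0r addr0 subr0. Qed.

Lemma cj0 : cj 0 = 0.
Proof. by rewrite -(rmorph0 io) cj_io. Qed.

Lemma cj1 : cj 1 = 1.
Proof. by rewrite -(rmorph1 io) cj_io. Qed.

Lemma cj_s : cj s = - s.
Proof. by have := cj_def D HD 0 1; rewrite rmorph0 rmorph1 !mul1r !add0r. Qed.

Lemma cjN z : cj (- z) = - cj z.
Proof. by rewrite -mulN1r cjM -(rmorph1 io) -rmorphN cj_io rmorphN rmorph1 mulN1r. Qed.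

Lemma cjB z w : cj (z - w) = cj z - cj w.
Proof. by rewrite cjD cjN. Qed.

Lemma cjK : involutive cj.
Proof. by move=> z; rewrite [cj z]cjE cjB cjM cj_s !cj_io mulrN opprK -coordE. Qed.

Lemma cj_eq0 z : (cj z == 0) = (z == 0).
Proof. by rewrite -{1}cj0 (inj_eq (inv_inj cjK)). Qed.

Lemma cjV z : cj z^-1 = (cj z)^-1.
Proof.
have [->|z0] := eqVneq z 0; first by rewrite invr0 cj0 invr0.
by apply: (mulfI (_ : cj z != 0)); rewrite ?cj_eq0 // -cjM !mulfV ?cj_eq0 ?cj1.
Qed.

Lemma mul_cj z : z * cj z = io (qnorm eps (re z) (im z)).
Proof. by rewrite cjE {1}(coordE z) /qnorm; coord_ring. Qed.

Lemma inPE_coord (m : nat) z : pE m z <-> pF m (re z) /\ pF m (im z).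
Proof.
rewrite -vge_qnorm /inPE mul_cj -PoszD addnn -mul2n; split.
  by case=> c [/(fmorph_inj io) ->].
by move=> zm; exists (qnorm eps (re z) (im z)).
Qed.

Lemma coordD z w : re (z + w) = re z + re w /\ im (z + w) = im z + im w.
Proof. by apply: coord_eq; rewrite {1}(coordE z) {1}(coordE w); coord_ring. Qed.

Lemma coordN z : re (- z) = - re z /\ im (- z) = - im z.
Proof. by apply: coord_eq; rewrite {1}(coordE z); coord_ring. Qed.

Lemma coordM z w : re (z * w) = re z * re w + eps * (im z * im w) /\
  im (z * w) = re z * im w + im z * re w.
Proof. by apply: coord_eq; rewrite {1}(coordE z) {1}(coordE w); coord_ring. Qed.

Lemma coord_io a : re (io a) = a /\ im (io a) = 0.
Proof. by apply: coord_eq; rewrite rmorph0 mul0r addr0. Qed.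

Lemma coord_sio a : re (s * io a) = 0 /\ im (s * io a) = a.
Proof. by apply: coord_eq; rewrite rmorph0 add0r mulrC. Qed.

Lemma coord_cj z : re (cj z) = re z /\ im (cj z) = - im z.
Proof. by apply: coord_eq; rewrite cjE; coord_ring. Qed.

Lemma inPE0 m : pE m 0.
Proof. by apply/inPE_coord; rewrite -(rmorph0 io) (coord_io 0).1 (coord_io 0).2; split; left. Qed.

Lemma inPEW m k z : (k <= m)%N -> pE m z -> pE k z.
Proof. by move=> km; rewrite !inPE_coord => -[? ?]; split; apply: vgeW (_ : k <= m :> int) _. Qed.

Lemma inPED m z w : pE m z -> pE m w -> pE m (z + w).
Proof.
by rewrite !inPE_coord (coordD z w).1 (coordD z w).2 => -[? ?] [? ?]; split; apply: (vgeD vF).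
Qed.

Lemma inPEN m z : pE m (- z) <-> pE m z.
Proof. by rewrite !inPE_coord (coordN z).1 (coordN z).2 !(vgeN vF). Qed.

Lemma inPEB m z w : pE m z -> pE m w -> pE m (z - w).
Proof. by move=> zm wm; apply: inPED zm _; apply/inPEN. Qed.

Lemma inPEM m k z w : pE m z -> pE k w -> pE (m + k) (z * w).
Proof.
rewrite !inPE_coord (coordM z w).1 (coordM z w).2 PoszD => -[? ?] [? ?].
split; apply: (vgeD vF); try exact: (vgeM vF).
rewrite -[X in pF X _]add0r; apply: (vgeM vF); first by right; rewrite val_eps.
exact: (vgeM vF).
Qed.

Lemma inPEMl m z w : pE 0 z -> pE m w -> pE m (z * w).
Proof. by move=> z0 wm; have := inPEM z0 wm; rewrite add0n. Qed.

Lemma inPEMr m z w : pE m z -> pE 0 w -> pE m (z * w).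
Proof. by move=> zm w0; have := inPEM zm w0; rewrite addn0. Qed.

Lemma inPE_cj m z : pE m (cj z) <-> pE m z.
Proof. by rewrite !inPE_coord (coord_cj z).1 (coord_cj z).2 (vgeN vF). Qed.

Lemma inPE_io m a : pE m (io a) <-> pF m a.
Proof.
by rewrite inPE_coord (coord_io a).1 (coord_io a).2; split=> [[//]|ma]; split=> //; exact: vge0.
Qed.

Lemma inPE_sio m a : pE m (s * io a) <-> pF m a.
Proof.
by rewrite inPE_coord (coord_sio a).1 (coord_sio a).2; split=> [[//]|ma]; split=> //; exact: vge0.
Qed.

Lemma inPE_sint (m : nat) y : pF m y -> pE m (s * io y).
Proof. by move/inPE_sio. Qed.

Lemma inPE01 : pE 0 1.
Proof. by rewrite -(rmorph1 io) inPE_io; apply: vge01. Qed.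

Lemma inPE11 : ~ pE 1 1.
Proof. by rewrite -(rmorph1 io) inPE_io; apply: vge11. Qed.

Lemma inPE_unit z : pE 0 z -> ~ pE 1 z -> z != 0 /\ pE 0 z^-1.
Proof.
move=> /inPE_coord[re_int im_int]; rewrite inPE_coord => z1.
have [n0 vn] := qnorm_unit re_int im_int z1.
have z0 : z != 0.
  by apply: contra_neq n0 => z0; apply: (fmorph_inj io); rewrite -mul_cj z0 mul0r rmorph0.
have -> : z^-1 = cj z * io (qnorm eps (re z) (im z))^-1.
  by rewrite fmorphV -mul_cj invfM mulrCA mulfV ?mulr1 // cj_eq0.
split=> //; apply: inPEMl; first by apply/inPE_cj/inPE_coord.
by apply/inPE_io; right; rewrite (valuationV vF) // vn.
Qed.

Local Notation i0 := (@ord0 1).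
Local Notation i1 := (@ord_max 1).
Local Notation w := (wmx D).
Local Notation G := (inG D).
Local Notation B := (inB D).
Local Notation K := (inK D).

Definition star (g : 'M[E]_2) := (map_mx cj g)^T.

Lemma star_m2 a b c d : star (m2 a b c d) = m2 (cj a) (cj c) (cj b) (cj d).
Proof. by rewrite /star map_m2 tr_m2. Qed.

Lemma starM g h : star (g *m h) = star h *m star g.
Proof.
by rewrite (m2_eta g) (m2_eta h) !mulmx_m2 !star_m2 mulmx_m2 !cjD !cjM; congr m2; ring.
Qed.

Lemma w_m2 : w = m2 0 1 1 0.
Proof. by apply/matrixP => i j; rewrite !mxE; case: (ord2P i) => ->; case: (ord2P j) => ->. Qed.

Lemma mulmx_ww : w *m w = 1%:M.
Proof. by rewrite w_m2 mulmx_m2 m2_1; congr m2; ring. Qed.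

Lemma inG_m2 a b c d : G (m2 a b c d) <-> [/\ cj c * a + cj a * c = 0,
  cj c * b + cj a * d = 1, cj d * a + cj b * c = 1 & cj d * b + cj b * d = 0].
Proof.
rewrite /inG -/(star _) star_m2 w_m2 !mulmx_m2 !(mulr0, mulr1, addr0, add0r).
by split=> [/m2_inj[-> -> -> ->]|[-> -> -> ->]].
Qed.

Lemma G_mul g h : G g -> G h -> G (g *m h).
Proof.
rewrite /inG -!/(star _) starM => Gg Gh.
by rewrite -!mulmxA (mulmxA (star g)) (mulmxA (star g *m w)) Gg mulmxA.
Qed.

Lemma G1 : G 1%:M.
Proof. by rewrite m2_1 inG_m2 cj0 cj1; split; ring. Qed.

(* [G] preserves the hermitian form [w], so [w g^* w] inverts [g]. *)
Definition ginv g := w *m star g *m w.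

Lemma ginv_m2 a b c d : ginv (m2 a b c d) = m2 (cj d) (cj b) (cj c) (cj a).
Proof. by rewrite /ginv star_m2 w_m2 !mulmx_m2; congr m2; ring. Qed.

Lemma mul_ginv_mx g : G g -> ginv g *m g = 1%:M.
Proof. by rewrite /inG /ginv => Gg; rewrite -!mulmxA (mulmxA (star g)) Gg mulmx_ww. Qed.

Lemma mul_mx_ginv g : G g -> g *m ginv g = 1%:M.
Proof. by move=> Gg; apply/mulmx1C/mul_ginv_mx. Qed.

Lemma G_ginv g : G g -> G (ginv g).
Proof.
move=> Gg; have := mul_mx_ginv Gg.
rewrite (m2_eta g) ginv_m2 mulmx_m2 m2_1 => /m2_inj[e1 e2 e3 e4].
by rewrite inG_m2 !cjK; split; rewrite mulrC [cj _ * _]mulrC.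
Qed.

Lemma B_mul b b' : B b -> B b' -> B (b *m b').
Proof.
move=> [Gb b10] [Gb' b'10]; split; first exact: G_mul.
by rewrite (m2_eta b) (m2_eta b') mulmx_m2 m2_10 b10 b'10 mul0r mulr0 addr0.
Qed.

Lemma B_ginv b : B b -> B (ginv b).
Proof. by move=> [Gb b10]; split; [exact: G_ginv|rewrite (m2_eta b) ginv_m2 m2_10 b10 cj0]. Qed.

Lemma B1 : B 1%:M.
Proof. by split; [exact: G1|rewrite m2_1 m2_10]. Qed.

Lemma B_diag b : B b -> cj (b i0 i0) * b i1 i1 = 1.
Proof.
move=> [Gb b10]; move: Gb; rewrite {1}(m2_eta b) inG_m2 b10 cj0 => -[_ bb _ _].
by rewrite mul0r add0r in bb.
Qed.

Lemma B_diag_neq0 b : B b -> b i0 i0 != 0 /\ b i1 i1 != 0.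
Proof.
move/B_diag => bb; split; apply/eqP => b0; move: bb; rewrite b0 ?cj0 ?mul0r ?mulr0 => /eqP.
all: by rewrite eq_sym oner_eq0.
Qed.

Lemma B_00 b : B b -> b i0 i0 = (cj (b i1 i1))^-1.
Proof.
move=> Bb; have [_ b11] := B_diag_neq0 Bb.
by rewrite -cjV -[b i0 i0]cjK; congr cj; apply: (mulIf b11); rewrite B_diag // mulVf.
Qed.

Lemma B_mul00 b b' : B b -> B b' -> (b *m b') i0 i0 = b i0 i0 * b' i0 i0.
Proof.
by move=> _ [_ b'10]; rewrite {1}(m2_eta b) {1}(m2_eta b') mulmx_m2 m2_00 b'10 mulr0 addr0.
Qed.

Lemma B_mulrow1 b (M : 'M[E]_2) j : B b -> (b *m M) i1 j = b i1 i1 * M i1 j.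
Proof.
move=> [_ b10]; rewrite !mxE !big_ord_recl big_ord0 addr0.
by rewrite (_ : lift ord0 ord0 = i1) ?b10 ?mul0r ?add0r //; apply: val_inj.
Qed.

Lemma inKE m k : K m k <-> G k /\ [/\ pE m (k i0 i0 - 1), pE m (k i0 i1),
  pE m (k i1 i0) & pE m (k i1 i1 - 1)].
Proof.
split=> [[Gk kI]|[Gk [k00 k01 k10 k11]]]; last first.
  by split=> // i j; case: (ord2P i) => ->; case: (ord2P j) => ->; rewrite //= subr0.
by split=> //; split; [move: (kI i0 i0)|move: (kI i0 i1)|move: (kI i1 i0)|move: (kI i1 i1)];
  rewrite //= subr0.
Qed.

Lemma inPEMm m z z' : pE m z -> pE m z' -> pE m (z * z').
Proof. by move=> zm z'm; apply: inPEW (inPEM zm z'm); rewrite leq_addr. Qed.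

Lemma K_mul m k k' : K m k -> K m k' -> K m (k *m k').
Proof.
move=> [Gk kI] [Gk' k'I]; split=> [|i j]; first exact: G_mul.
pose X i j := k i j - (i == j)%:R; pose X' i j := k' i j - (i == j)%:R.
have -> : (k *m k') i j - (i == j)%:R =
          X i i0 * X' i0 j + X i i1 * X' i1 j + X i j + X' i j.
  by rewrite /X /X' mulmx2E; case: (ord2P i) => ->; case: (ord2P j) => ->; rewrite /=; ring.
have XX l : pE m (X i l * X' l j) by apply: inPEMm (kI i l) (k'I l j).
by apply: inPED (inPED (inPED (XX i0) (XX i1)) (kI i j)) (k'I i j).
Qed.

Lemma K_ginv m k : K m k -> K m (ginv k).
Proof.
rewrite !inKE => -[Gk [a1 b c d1]]; split; first exact: G_ginv.
by rewrite (m2_eta k) ginv_m2 !m2E -cj1 -!cjB; split; apply/inPE_cj.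
Qed.

Lemma K1 m : K m 1%:M.
Proof. by rewrite inKE m2_1 !m2E subrr -m2_1; split; [exact: G1|split; exact: inPE0]. Qed.

Lemma inPE_near1_int m z : pE m (z - 1) -> pE 0 z.
Proof. by move=> z1; rewrite -(subrK 1 z); apply: inPED (inPEW _ z1) inPE01. Qed.

Lemma inPE_not_near1 z : pE 1 z -> ~ pE 1 (z - 1).
Proof. by move=> z1 z11; apply: inPE11; rewrite -(subKr z 1); apply: inPEB. Qed.

Definition unif : F := epsilon (inhabits 0) (fun p => p != 0 /\ v p = 1).
Definition reps : seq F := epsilon (inhabits [::]) (residue_system v q).

Let unif_spec : unif != 0 /\ v unif = 1.
Proof. by apply: (epsilon_spec _ (fun p => p != 0 /\ v p = 1)); apply: val_unif. Qed.

Let reps_sys : residue_system v q reps.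
Proof. exact: (epsilon_spec _ _ (residue_card D HD)). Qed.

Local Notation Y := (expansion q reps unif).

Let unif0 : unif != 0 := unif_spec.1.
Let val_unif1 : v unif = 1 := unif_spec.2.
Let Y_int := expansion_int vF reps_sys val_unif1.
Let Y_cover := expansion_cover vF reps_sys unif0 val_unif1.
Let Y_inj := expansion_inj vF reps_sys unif0 val_unif1.
Let unif_mul := vge_pi_mul vF val_unif1.
Let unif_div := vge_div_pi vF unif0 val_unif1.

Lemma vge_unif_Y n m : pF 1 (unif * Y n m).
Proof. by move/unif_mul: (Y_int n m); rewrite add0r. Qed.

Definition lower (y : F) := m2 1 0 (s * io y) 1.
Definition upper (t : F) := m2 1 (s * io t) 0 1.

Lemma cj_sio y : cj (s * io y) = - (s * io y).
Proof. by rewrite cjM cj_s cj_io mulNr. Qed.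

Lemma lower_G y : G (lower y).
Proof. by rewrite inG_m2 cj_sio cj0 cj1; split; ring. Qed.

Lemma upper_G t : G (upper t).
Proof. by rewrite inG_m2 cj_sio cj0 cj1; split; ring. Qed.

Lemma w_G : G w.
Proof. by rewrite w_m2 inG_m2 cj0 cj1; split; ring. Qed.

Lemma lowerD y y' : lower y *m lower y' = lower (y + y').
Proof. by rewrite /lower /upper mulmx_m2 rmorphD; congr m2; ring. Qed.

Lemma upperD t t' : upper t *m upper t' = upper (t + t').
Proof. by rewrite /lower /upper mulmx_m2 rmorphD; congr m2; ring. Qed.

Lemma lower0 : lower 0 = 1%:M.
Proof. by rewrite /lower rmorph0 mulr0 m2_1. Qed.

Lemma w_upper x : w *m upper x = m2 0 1 1 (s * io x).
Proof. by rewrite w_m2 /upper mulmx_m2; congr m2; ring. Qed.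

Lemma lower_K (m : nat) y : pF m y -> K m (lower y).
Proof.
move=> ym; rewrite inKE !m2E subrr; split; first exact: lower_G.
by split; rewrite ?inPE_sio //; apply: inPE0.
Qed.

Lemma upper_K (m : nat) t : pF m t -> K m (upper t).
Proof.
move=> tm; rewrite inKE !m2E subrr; split; first exact: upper_G.
by split; rewrite ?inPE_sio //; apply: inPE0.
Qed.

(* The entry [c conj d + d conj c = 0] of [g ginv g = 1] makes [c / d] purely imaginary. *)
Lemma G_row1_ratio g : G g -> g i1 i1 != 0 -> exists y, g i1 i0 = g i1 i1 * (s * io y).
Proof.
move=> Gg g11; have gV := mul_mx_ginv Gg.
rewrite (m2_eta g) ginv_m2 mulmx_m2 m2_1 in gV; case/m2_inj: gV => _ _ e10 _.
set u := g i1 i0 / g i1 i1.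
have cg11 : cj (g i1 i1) != 0 by rewrite cj_eq0.
have u_imag : u + cj u = 0.
  have : (u + cj u) * (g i1 i1 * cj (g i1 i1)) = 0.
    by rewrite -e10 /u cjM cjV; field; rewrite g11 cg11.
  by move/eqP; rewrite !mulf_eq0 (negPf g11) (negPf cg11) !orbF => /eqP.
exists (im u); rewrite -[g i1 i0](divfK g11) -/u mulrC; congr (_ * _).
suff re_u : re u = 0 by rewrite {1}(coordE u) re_u rmorph0 add0r mulrC.
have : io (re u * 2) = 0.
  by rewrite -u_imag cjE {2}(coordE u) rmorphM rmorph_nat; ring.
by move/eqP; rewrite fmorph_eq0 mulf_eq0 (negPf two_unit.1) orbF => /eqP.
Qed.

Section Cosets.
Variable n : nat.
Hypothesis n_gt0 : (0 < n)%N.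

Definition ncosets := (q ^ n.-1 * q.+1)%N.

Lemma ncosetsE : ncosets = (q ^ n + q ^ n.-1)%N.
Proof. by rewrite /ncosets -(prednK n_gt0) /= mulnS expnSr addnC mulnC. Qed.

(* Representatives of [B \ G / K_n]: [lower y] for [y] in [O / p^n], and
   [w upper x] for [x] in [p / p^n]. *)
Definition rep (j : nat) :=
  if (j < q ^ n)%N then lower (Y n j) else w *m upper (unif * Y n.-1 (j - q ^ n)).

Lemma rep_G j : G (rep j).
Proof. by rewrite /rep; case: ifP => _; [exact: lower_G|exact: G_mul w_G (upper_G _)]. Qed.

Definition Bfactor j g b := B b /\ exists2 k, K n k & g = b *m rep j *m k.

Lemma double_coset_lower g y : G g -> g i1 i0 = g i1 i1 * (s * io y) -> pF 0 y ->
  exists2 j, (j < ncosets)%N & exists b, Bfactor j g b.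
Proof.
move=> Gg g10 y_int; have [m mn ym] := Y_cover n y_int.
exists m; first by rewrite ncosetsE ltn_addr.
exists (g *m lower (- y)); split; last exists (lower (y - Y n m)).
- split; first exact: G_mul (lower_G _).
  by rewrite {1}(m2_eta g) mulmx_m2 m2_10 g10 rmorphN; ring.
- exact: lower_K.
- by rewrite /rep mn -!mulmxA !lowerD (_ : - y + _ = 0) ?lower0 ?mulmx1 //; ring.
Qed.

Lemma double_coset_upper g x : G g -> g i1 i1 = g i1 i0 * (s * io x) -> pF 1 x ->
  exists2 j, (j < ncosets)%N & exists b, Bfactor j g b.
Proof.
move=> Gg g11 x1; have [m mn xm] := Y_cover n.-1 (unif_div x1).
exists (q ^ n + m)%N; first by rewrite ncosetsE ltn_add2l.
exists (g *m ginv (w *m upper x)); split; last exists (upper (x - unif * Y n.-1 m)).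
- split; first exact: G_mul Gg (G_ginv (G_mul w_G (upper_G x))).
  by rewrite w_upper {1}(m2_eta g) ginv_m2 mulmx_m2 m2_10 g11 cj_sio cj1; ring.
- apply: upper_K; rewrite (_ : x - _ = unif * (x / unif - Y n.-1 m)); last first.
    by rewrite mulrBr [unif * (x / _)]mulrC divfK.
  by apply: vgeW (unif_mul xm); lia.
- rewrite /rep ifN ?addKn -?leqNgt ?leq_addr // -mulmxA -[(w *m _) *m _]mulmxA upperD.
  rewrite [unif * _ + _]addrC subrK -mulmxA mul_ginv_mx ?mulmx1 //.
  exact: G_mul w_G (upper_G x).
Qed.

Lemma double_coset_cover g : G g -> exists2 j, (j < ncosets)%N & exists b, Bfactor j g b.
Proof.
move=> Gg; have [g11|g11] := eqVneq (g i1 i1) 0.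
  by apply: (double_coset_upper (x := 0)) => //; [rewrite rmorph0 mulr0 mulr0|apply: vge0].
have [y g10] := G_row1_ratio Gg g11.
case: (classic (pF 0 y)) => [y_int|y_nint]; first exact: double_coset_lower g10 y_int.
have y0 : y != 0 by apply/eqP => y0; apply: y_nint; rewrite y0; apply: vge0.
have ey0 : eps * y != 0 by rewrite mulf_neq0.
apply: (double_coset_upper (x := (eps * y)^-1)) => //.
  have ss : s * io y * (s * io (eps * y)^-1) = io (eps * y * (eps * y)^-1).
    by rewrite !rmorphM -(s_sq D HD); ring.
  by rewrite g10 -mulrA ss mulfV // rmorph1 mulr1.
right; rewrite (valuationV vF) // (valuationM vF) // val_eps add0r.
have vy : ~ 0 <= v y by move=> vy; apply: y_nint; right.
by move: (v y) vy => a; lia.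
Qed.

Section RowUniqueness.
Variables (k : 'M[E]_2) (mu : E).
Hypothesis Kk : K n k.
Let a1 : pE n (k i0 i0 - 1). Proof. by case/inKE: Kk => _ []. Qed.
Let b : pE n (k i0 i1). Proof. by case/inKE: Kk => _ []. Qed.
Let c : pE n (k i1 i0). Proof. by case/inKE: Kk => _ []. Qed.
Let d1 : pE n (k i1 i1 - 1). Proof. by case/inKE: Kk => _ []. Qed.
Let n_int z : pE n z -> pE 0 z. Proof. exact: inPEW. Qed.
Let n_p z : pE n z -> pE 1 z. Proof. exact: inPEW. Qed.

Lemma row_lower_lower y y' : pF 0 y -> pF 0 y' ->
  s * io y * k i0 i0 + k i1 i0 = mu * (s * io y') -> s * io y * k i0 i1 + k i1 i1 = mu ->
  pE n (mu - 1) /\ pF n (y - y').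
Proof.
move=> y_int y'_int e0 e1.
have mu1 : pE n (mu - 1).
  by rewrite -e1 -addrA; apply: inPED (inPEMl (inPE_sint y_int) b) d1.
split=> //; apply/inPE_sio.
have -> : s * io (y - y') = (mu - 1) * (s * io y') - s * io y * (k i0 i0 - 1) - k i1 i0.
  by rewrite rmorphB mulrBl -e0; ring.
apply: inPEB c; apply: inPEB (inPEMr mu1 (inPE_sint y'_int)) _.
exact: inPEMl (inPE_sint y_int) a1.
Qed.

Lemma row_lower_upper y x' : pF 0 y -> pF 1 x' ->
  s * io y * k i0 i0 + k i1 i0 = mu -> s * io y * k i0 i1 + k i1 i1 = mu * (s * io x') -> False.
Proof.
move=> y_int x'1 e0 e1.
have mu_int : pE 0 mu.
  by rewrite -e0; apply: inPED (inPEMl (inPE_sint y_int) (inPE_near1_int a1)) (n_int c).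
apply: inPE11.
have -> : 1 = mu * (s * io x') - s * io y * k i0 i1 - (k i1 i1 - 1) by rewrite -e1; ring.
apply: inPEB _ (n_p d1); apply: inPEB (inPEMl mu_int (inPE_sint x'1)) _.
exact: inPEMl (inPE_sint y_int) (n_p b).
Qed.

Lemma row_upper_lower x y' : pF 1 x -> pF 0 y' ->
  k i0 i0 + s * io x * k i1 i0 = mu * (s * io y') -> k i0 i1 + s * io x * k i1 i1 = mu -> False.
Proof.
move=> x1 y'_int e0 e1.
have mu1 : pE 1 mu.
  by rewrite -e1; apply: inPED (n_p b) (inPEMr (inPE_sint x1) (inPE_near1_int d1)).
apply: (inPE_not_near1 _ (n_p a1)).
have -> : k i0 i0 = mu * (s * io y') - s * io x * k i1 i0 by rewrite -e0; ring.
exact: inPEB (inPEMr mu1 (inPE_sint y'_int)) (inPEMr (inPE_sint x1) (n_int c)).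
Qed.

Lemma row_upper_upper x x' : pF 1 x -> pF 1 x' ->
  k i0 i0 + s * io x * k i1 i0 = mu -> k i0 i1 + s * io x * k i1 i1 = mu * (s * io x') ->
  pE n (mu - 1) /\ pF n (x' - x).
Proof.
move=> x1 x'1 e0 e1.
have mu1 : pE n (mu - 1).
  by rewrite -e0 addrAC; apply: inPED a1 (inPEMl (inPEW (leq0n 1) (inPE_sint x1)) c).
split=> //; apply/inPE_sio.
have -> : s * io (x' - x) = s * io x' * - (mu - 1) + k i0 i1 + s * io x * (k i1 i1 - 1).
  rewrite rmorphB; apply/eqP; rewrite -subr_eq0; apply/eqP.
  by transitivity (mu * (s * io x') - (k i0 i1 + s * io x * k i1 i1)); [ring|rewrite e1 subrr].
apply: inPED (inPED _ b) (inPEMl (inPEW (leq0n 1) (inPE_sint x1)) d1).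
by apply: inPEMl (inPEW (leq0n 1) (inPE_sint x'1)) _; apply/inPEN.
Qed.

End RowUniqueness.

Lemma rep_row1_uniq j j' k mu : (j < ncosets)%N -> (j' < ncosets)%N -> K n k ->
  (rep j *m k) i1 i0 = mu * rep j' i1 i0 -> (rep j *m k) i1 i1 = mu * rep j' i1 i1 ->
  j = j' /\ pE n (mu - 1).
Proof.
rewrite ncosetsE => jn j'n Kk; rewrite /rep.
case: ifPn => jq; case: ifPn => j'q; rewrite ?w_upper /lower !mulmx2E !m2E !mul1r ?mulr1 => e0 e1.
- have [mu1 yy] := row_lower_lower Kk (Y_int _ _) (Y_int _ _) e0 e1.
  by split=> //; apply: Y_inj yy.
- by case: (row_lower_upper Kk (Y_int _ _) (vge_unif_Y _ _) e0 e1).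
- by case: (row_upper_lower Kk (vge_unif_Y _ _) (Y_int _ _) e0 e1).
- have [mu1 xx] := row_upper_upper Kk (vge_unif_Y _ _) (vge_unif_Y _ _) e0 e1.
  split=> //; move: jq j'q; rewrite -!leqNgt => jq j'q.
  suff : (j' - q ^ n)%N = (j - q ^ n)%N by lia.
  apply: (Y_inj (n := n.-1)); [lia|lia|].
  move/unif_div: xx; rewrite -mulrBr [unif * _]mulrC mulfK //.
  by apply: vgeW; lia.
Qed.

Lemma Bfactor_G j g b : Bfactor j g b -> G g.
Proof. by case=> [[Gb _] [k [Gk _] ->]]; apply: G_mul (G_mul Gb (rep_G j)) Gk. Qed.

Lemma BfactorMr j g b k : K n k -> Bfactor j g b -> Bfactor j (g *m k) b.
Proof.
by move=> Kk [Bb [k' Kk' ->]]; split=> //; exists (k' *m k); [exact: K_mul|rewrite mulmxA].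
Qed.

Lemma BfactorMl j g b b' : B b' -> Bfactor j g b -> Bfactor j (b' *m g) (b' *m b).
Proof. by move=> Bb' [Bb [k Kk ->]]; split; [exact: B_mul|exists k; rewrite ?mulmxA]. Qed.

Lemma Bfactor_rep j : Bfactor j (rep j) 1%:M.
Proof. by split; [exact: B1|exists 1%:M; [exact: K1|rewrite mul1mx mulmx1]]. Qed.

Section Chi.
Variable chi : E -> CC.
Hypothesis chi_char : is_char D chi.
Hypothesis chi_trivial : forall a, pE n (a - 1) -> chi a = 1.

Lemma chi_conjV_near1 mu : pE n (mu - 1) -> chi (cj mu)^-1 = 1.
Proof.
move=> mu1; apply: chi_trivial.
have cmu1 : pE n (cj mu - 1) by rewrite -cj1 -cjB; apply/inPE_cj.
have cmu_p : ~ pE 1 (cj mu) by move/inPE_not_near1; apply; apply: inPEW cmu1.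
have [cmu0 cmuV] := inPE_unit (inPE_near1_int cmu1) cmu_p.
rewrite (_ : _ - 1 = (cj mu)^-1 * - (cj mu - 1)); last by field.
by apply: inPEMl cmuV _; apply/inPEN.
Qed.

Lemma Bfactor_uniq j j' g b b' : (j < ncosets)%N -> (j' < ncosets)%N ->
  Bfactor j g b -> Bfactor j' g b' -> j = j' /\ chi (b i0 i0) = chi (b' i0 i0).
Proof.
move=> jn j'n [Bb [k Kk ->]] [Bb' [k' Kk' gE]].
have [b00 b11] := B_diag_neq0 Bb; have [b'00 b'11] := B_diag_neq0 Bb'.
set mu := b' i1 i1 / b i1 i1.
have b'E : b' i1 i1 = b i1 i1 * mu by rewrite mulrC divfK.
have bE : b *m (rep j *m (k *m ginv k')) = b' *m rep j'.
  by rewrite mulmxA mulmxA gE -mulmxA mul_mx_ginv ?mulmx1 //; case: Kk'.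
have row l : (rep j *m (k *m ginv k')) i1 l = mu * rep j' i1 l.
  by apply: (mulfI b11); rewrite mulrA -b'E -!B_mulrow1 // bE.
have [<- mu1] := rep_row1_uniq jn j'n (K_mul Kk (K_ginv Kk')) (row i0) (row i1).
split=> //; rewrite !B_00 // b'E cjM invfM.
case: chi_char => chiM _; rewrite chiM ?(chi_conjV_near1 mu1) ?mulr1 //.
all: by rewrite invr_eq0 cj_eq0 ?mulf_neq0 ?invr_eq0.
Qed.

(* Well defined by [Bfactor_uniq]: every [B]-factor of [g] gives the same value. *)
Definition basis_fun (j : nat) (g : Mat D) : CC :=
  match excluded_middle_informative (exists b, Bfactor j g b) with
  | left _ => chi ((epsilon (inhabits (1%:M : 'M[E]_2)) (Bfactor j g)) i0 i0)
  | right _ => 0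
  end.

Lemma basis_funE j g b : (j < ncosets)%N -> Bfactor j g b -> basis_fun j g = chi (b i0 i0).
Proof.
move=> jn gb; rewrite /basis_fun; case: excluded_middle_informative => [ex|]; last first.
  by case; exists b.
by have [_ ->] := Bfactor_uniq jn jn (epsilon_spec (inhabits 1%:M) _ ex) gb.
Qed.

Lemma basis_fun0 j g : ~ (exists b, Bfactor j g b) -> basis_fun j g = 0.
Proof. by rewrite /basis_fun; case: excluded_middle_informative. Qed.

Lemma basis_fun_rep j i : (j < ncosets)%N -> (i < ncosets)%N ->
  basis_fun j (rep i) = (j == i)%:R.
Proof.
move=> jn iN; have [<-|ji] := eqVneq j i.
  by rewrite (basis_funE jn (Bfactor_rep j)) m2_1 m2_00 chi_trivial // subrr; apply: inPE0.
rewrite basis_fun0 // => -[b /Bfactor_uniq /(_ (Bfactor_rep i)) []] //.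
by move/eqP; rewrite (negPf ji).
Qed.

Lemma basis_fun_Vfix j : (j < ncosets)%N -> Vfix D chi n (basis_fun j).
Proof.
move=> jn.
have fixK g k : K n k -> basis_fun j (g *m k) = basis_fun j g.
  move=> Kk; case: (classic (exists b, Bfactor j g b)) => [[b gb]|no_b].
    by rewrite !(basis_funE jn (b := b)) //; apply: BfactorMr.
  rewrite !basis_fun0 // => -[b gkb]; apply: no_b; exists b.
  by rewrite -[g]mulmx1 -(mul_mx_ginv (proj1 Kk)) mulmxA; apply: BfactorMr (K_ginv Kk) gkb.
split; [|split; [|split]].
- by move=> g nGg; rewrite basis_fun0 // => -[b /Bfactor_G].
- by move=> g _; exists n => k Kk; apply: fixK.
- move=> b' g Bb' Gg; case: (classic (exists b, Bfactor j g b)) => [[b gb]|no_b].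
    rewrite (basis_funE jn gb) (basis_funE jn (BfactorMl Bb' gb)) B_mul00 //; last by case: gb.
    case: chi_char => chiM _; apply: chiM; first by case: (B_diag_neq0 Bb').
    by case: gb => Bb _; case: (B_diag_neq0 Bb).
  rewrite !basis_fun0 ?mulr0 // => -[b b'gb]; apply: no_b; exists (ginv b' *m b).
  by rewrite -[g]mul1mx -(mul_ginv_mx (proj1 Bb')) -mulmxA; apply: BfactorMl (B_ginv Bb') b'gb.
- by move=> g k _; apply: fixK.
Qed.

Lemma Vfix_dim : has_dim D (Vfix D chi n) ncosets.
Proof.
exists (fun i : 'I_ncosets => basis_fun i); split; [|split].
- by move=> i; apply: basis_fun_Vfix.
- move=> c lin_indep i; have := lin_indep (rep i).
  rewrite (bigD1 i) // big1 => [|l li]; last by rewrite basis_fun_rep // val_eqE (negPf li) mulr0.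
  by rewrite /= basis_fun_rep // eqxx mulr1 addr0.
- move=> f [f_G [_ [fB fK]]]; exists (fun i : 'I_ncosets => f (rep i)) => g.
  case: (classic (G g)) => [Gg|nGg]; last first.
    by rewrite f_G // big1 // => i _; rewrite basis_fun0 ?mulr0 // => -[b /Bfactor_G].
  have [j jn [b gb]] := double_coset_cover Gg.
  rewrite (bigD1 (Ordinal jn)) // big1 => [|i ij]; last first.
    rewrite basis_fun0 ?mulr0 // => -[b' /(Bfactor_uniq (ltn_ord i) jn)/(_ gb) [eq_ij _]].
    by move/eqP: ij; apply; apply: val_inj.
  rewrite /= addr0 (basis_funE jn gb) mulrC.
  case: gb => Bb [k Kk ->].
  by rewrite (fK _ _ (G_mul (proj1 Bb) (rep_G j)) Kk) (fB _ _ Bb (rep_G j)).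
Qed.

End Chi.

End Cosets.

Lemma Vfix_acts_trivially chi n : acts_trivially D (Vfix D chi n) n.
Proof.
move=> f k g [f_G [_ [_ fK]]] Kk; case: (classic (G g)) => [Gg|nGg]; first exact: fK.
rewrite !f_G // => Ggk; apply: nGg.
by rewrite -[g]mulmx1 -(mul_mx_ginv (proj1 Kk)) mulmxA; apply: G_mul Ggk (G_ginv (proj1 Kk)).
Qed.

Lemma acts_trivially_depth (W : Fun D -> Prop) n : (0 < n)%N -> acts_trivially D W n ->
  exists d, rep_depth D W d /\ (d < n)%N.
Proof.
move=> n_gt0 Wn.
pose P d := if excluded_middle_informative (acts_trivially D W d.+1) then true else false.
have PP d : reflect (acts_trivially D W d.+1) (P d).
  by rewrite /P; case: excluded_middle_informative => ?; constructor.
have exP : exists d, P d by exists n.-1; apply/PP; rewrite prednK.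
case: (ex_minnP exP) => d /PP Wd d_min; exists d; split.
  by split=> // d' d'd /PP /d_min; rewrite leqNgt d'd.
by rewrite -(prednK n_gt0) ltnS d_min //; apply/PP; rewrite prednK.
Qed.

Lemma char_depth_trivial chi r n : char_depth D chi r -> (r < n)%N ->
  forall a, pE n (a - 1) -> chi a = 1.
Proof.
move=> [[_ chi_r1]|[-> chi0]] rn a a1; first by apply: chi_r1; apply: inPEW a1.
apply: chi0; split; first exact: inPE_near1_int a1.
by move=> a_p; apply: (inPE_not_near1 a_p); apply: inPEW a1.
Qed.

End U11.

Theorem lemma4p3 (D : U11data) (HD : U11_ax D) (chi : uE D -> CC)
  (Hchi : is_char D chi) (r : nat) (Hr : char_depth D chi r) (n : nat)
  (Hn : (r.+1 <= n)%N) :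
  (forall W, irr_subrep D (Vfix D chi n) W ->
     exists d, rep_depth D W d /\ (d < n)%N) /\
  has_dim D (Vfix D chi n) (uq D ^ n.-1 * (uq D).+1)%N.
Proof.
have n_gt0 : (0 < n)%N := leq_ltn_trans (leq0n r) Hn.
split; last exact (Vfix_dim HD n_gt0 Hchi (char_depth_trivial HD Hr Hn)).
move=> W [[WV _] _]; apply: acts_trivially_depth n_gt0 _ => f k g Wf.
exact (Vfix_acts_trivially HD g (WV f Wf)).
Qed.
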